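(* Let $G$ be any of the sequent calculi $\mathbf{GCE}$, $\mathbf{GCM}$, $\mathbf{GCMC}$, $\mathbf{GCEN}$, $\mathbf{GCMN}$, $\mathbf{GCK}$. Then the cut rule is admissible in $G$: if $G\vdash\Gamma_1\Rightarrow\phi,\Delta_1$ and $G\vdash\phi,\Gamma_2\Rightarrow\Delta_2$, then $G\vdash\Gamma_1,\Gamma_2\Rightarrow\Delta_1,\Delta_2$.
   Context: Formulas are those of $\mathcal{L}_\triangleright$: built from atoms and $\bot$ with $\wedge,\vee,\to$ and the binary $\triangleright$. A sequent is $\Gamma\Rightarrow\Delta$ with $\Gamma,\Delta$ finite multisets of formulas. $\mathbf{G3cp}$ has axioms $\Gamma,p\Rightarrow p,\Delta$ ($p$ atomic) and $\Gamma,\bot\Rightarrow\Delta$, and rules: $(L\wedge)$ from $\Gamma,\phi,\psi\Rightarrow\Delta$ infer $\Gamma,\phi\wedge\psi\Rightarrow\Delta$; $(R\wedge)$ from $\Gamma\Rightarrow\phi,\Delta$ and $\Gamma\Rightarrow\psi,\Delta$ infer $\Gamma\Rightarrow\phi\wedge\psi,\Delta$; $(L\vee)$ from $\Gamma,\phi\Rightarrow\Delta$ and $\Gamma,\psi\Rightarrow\Delta$ infer $\Gamma,\phi\vee\psi\Rightarrow\Delta$; $(R\vee)$ from $\Gamma\Rightarrow\phi,\psi,\Delta$ infer $\Gamma\Rightarrow\phi\vee\psi,\Delta$; $(L\to)$ from $\Gamma\Rightarrow\phi,\Delta$ and $\Gamma,\psi\Rightarrow\Delta$ infer $\Gamma,\phi\to\psi\Rightarrow\Delta$;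 $(R\to)$ from $\Gamma,\phi\Rightarrow\psi,\Delta$ infer $\Gamma\Rightarrow\phi\to\psi,\Delta$. $\mathbf{G3W}$ is $\mathbf{G3cp}$ plus weakening: from $\Gamma\Rightarrow\Delta$ infer $\Gamma,\phi\Rightarrow\Delta$, resp. $\Gamma\Rightarrow\phi,\Delta$. Write ''$\alpha\Leftrightarrow\beta$'' as a premise for the two premises $\alpha\Rightarrow\beta$ and $\beta\Rightarrow\alpha$. Conditional rules (no extra context in the conclusion): $(CE)$ from $\phi_0\Leftrightarrow\phi_1$ and $\psi_0\Leftrightarrow\psi_1$ infer $\phi_1\triangleright\psi_1\Rightarrow\phi_0\triangleright\psi_0$; $(CM)$ from $\phi_0\Leftrightarrow\phi_1$ and $\psi_1\Rightarrow\psi_0$ infer $\phi_1\triangleright\psi_1\Rightarrow\phi_0\triangleright\psi_0$; $(CMC)$ for $n\ge1$, from $\phi_0\Leftrightarrow\phi_i$ ($1\le i\le n$) and $\psi_1,\dots,\psi_n\Rightarrow\psi_0$ infer $\phi_1\triangleright\psi_1,\dots,\phi_n\triangleright\psi_n\Rightarrow\phi_0\triangleright\psi_0$; $(CN)$ from $\Rightarrow\psi_0$ infer $\Rightarrow\phi_0\triangleright\psi_0$. $\mathbf{GCE},\mathbf{GCM},\mathbf{GCMC}$ are $\mathbf{G3W}$ plus $(CE)$, $(CM)$, $(CMC)$ respectively; $\mathbf{GCEN},\mathbf{GCMN},\mathbf{GCK}$ are $\mathbf{GCE},\mathbf{GCM},\mathbf{GCMC}$ plus $(CN)$. The cut rule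 is not part of these calculi. *)

From Stdlib Require Import List Permutation.
Import ListNotations.

Inductive form : Type :=
| Atom : nat -> form
| Bot : form
| And : form -> form -> form
| Or : form -> form -> form
| Imp : form -> form -> form
| Cond : form -> form -> form.

Inductive calculus : Type := GCE | GCM | GCMC | GCEN | GCMN | GCK.

Definition has_CE (c : calculus) : bool :=
  match c with GCE | GCEN => true | _ => false end.
Definition has_CM (c : calculus) : bool :=
  match c with GCM | GCMN => true | _ => false end.
Definition has_CMC (c : calculus) : bool :=
  match c with GCMC | GCK => true | _ => false end.
Definition has_CN (c : calculus) : bool :=
  match c with GCEN | GCMN | GCK => true | _ => false end.

(* Sequents Gamma => Delta with Gamma, Delta finite multisets, represented as
   lists taken up to permutation (rule [perm]). Cut is NOT a rule. *)
Inductive derivable (c : calculus) : list form -> list form -> Prop :=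
| perm : forall G G' D D', Permutation G G' -> Permutation D D' ->
    derivable c G D -> derivable c G' D'
| ax_atom : forall G D p, derivable c (Atom p :: G) (Atom p :: D)
| ax_bot : forall G D, derivable c (Bot :: G) D
| L_and : forall G D a b, derivable c (a :: b :: G) D ->
    derivable c (And a b :: G) D
| R_and : forall G D a b, derivable c G (a :: D) -> derivable c G (b :: D) ->
    derivable c G (And a b :: D)
| L_or : forall G D a b, derivable c (a :: G) D -> derivable c (b :: G) D ->
    derivable c (Or a b :: G) D
| R_or : forall G D a b, derivable c G (a :: b :: D) ->
    derivable c G (Or a b :: D)
| L_imp : forall G D a b, derivable c G (a :: D) -> derivable c (b :: G) D ->
    derivable c (Imp a b :: G) D
| R_imp : forall G D a b, derivable c (a :: G) (b :: D) ->
    derivable c G (Imp a b :: D)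
| WL : forall G D a, derivable c G D -> derivable c (a :: G) D
| WR : forall G D a, derivable c G D -> derivable c G (a :: D)
| rule_CE : forall a0 a1 b0 b1, has_CE c = true ->
    derivable c [a0] [a1] -> derivable c [a1] [a0] ->
    derivable c [b0] [b1] -> derivable c [b1] [b0] ->
    derivable c [Cond a1 b1] [Cond a0 b0]
| rule_CM : forall a0 a1 b0 b1, has_CM c = true ->
    derivable c [a0] [a1] -> derivable c [a1] [a0] ->
    derivable c [b1] [b0] ->
    derivable c [Cond a1 b1] [Cond a0 b0]
| rule_CMC : forall (ps : list (form * form)) a0 b0, has_CMC c = true ->
    ps <> [] ->
    (forall p, In p ps -> derivable c [a0] [fst p] /\ derivable c [fst p] [a0]) ->
    derivable c (map snd ps) [b0] ->
    derivable c (map (fun p => Cond (fst p) (snd p)) ps) [Cond a0 b0]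
| rule_CN : forall a0 b0, has_CN c = true ->
    derivable c [] [b0] -> derivable c [] [Cond a0 b0].

(* Cut is eliminated in an equivalent calculus [der] in which weakening is
   absorbed into the axioms and the conditional rules, and principal formulas
   may sit anywhere in a sequent.  There the propositional rules are invertible
   and contraction is admissible, by induction on the contracted formula.  Cut
   is then admitted by induction on the cut formula and, inside, on the
   derivation of the left premise: a principal propositional cut is replaced by
   cuts on the components followed by contractions.  When the cut formula
   [u ▷ v] comes from a conditional rule on the left, the cut is pushed up the
   right premise to the conditional rules with [u ▷ v] principal, and each is
   fused with the left rule into a single conditional rule whose antecedent
   premises come from cuts on [u] and whose consequent premise comes from a cut
   on [v]. *)

From Stdlib Require Import List Permutation Arith Lia.
Import ListNotations.

Definition form_eq_dec (x y : form) : {x = y} + {x <> y}.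
Proof. decide equality; apply Nat.eq_dec. Qed.

Ltac perm_solve :=
  repeat match goal with H : Permutation _ _ |- _ =>
    let H' := fresh "Hcount" in
    pose proof (proj1 (Permutation_count_occ form_eq_dec _ _) H) as H'; clear H end;
  apply (proj2 (Permutation_count_occ form_eq_dec _ _));
  let x := fresh "x" in intro x;
  repeat match goal with H : forall _ : form, _ |- _ => specialize (H x) end;
  repeat (first [ rewrite count_occ_app in * | progress simpl in * ]);
  repeat (match goal with
          | |- context [form_eq_dec ?a ?b] => destruct (form_eq_dec a b); try subst
          | H : context [form_eq_dec ?a ?b] |- _ => destruct (form_eq_dec a b); try subst
          end); try congruence; lia.

Lemma in_split_perm {A : Type} (x : A) l : In x l -> exists k, Permutation l (x :: k).
Proof.
  intros Hx; destruct (in_split _ _ Hx) as [l1 [l2 ->]]; exists (l1 ++ l2).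
  apply Permutation_sym, Permutation_middle.
Qed.

Lemma perm_cons_In (z x : form) l G : Permutation l (x :: G) -> In z l -> z = x \/ In z G.
Proof. intros HG Hz; apply (Permutation_in _ HG) in Hz; destruct Hz; auto. Qed.

Lemma perm_cons_In_neq (z x : form) l G :
  Permutation l (x :: G) -> In z l -> z <> x -> In z G.
Proof. intros HG Hz Hneq; destruct (perm_cons_In _ _ _ _ HG Hz); congruence. Qed.

Lemma perm_dup_In (z x : form) l G : Permutation l (x :: x :: G) -> In z l -> In z (x :: G).
Proof. intros HG Hz; apply (Permutation_in _ HG) in Hz; simpl in *; tauto. Qed.

Lemma perm_cons_cases (x y : form) l l' m :
  Permutation m (x :: l) -> Permutation m (y :: l') ->
  (x = y /\ Permutation l l') \/ exists k, Permutation l (y :: k) /\ Permutation l' (x :: k).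
Proof.
  intros Hx Hy; assert (H : Permutation (x :: l) (y :: l')) by perm_solve.
  destruct (form_eq_dec x y) as [<-|Hneq].
  - left; split; [reflexivity | exact (Permutation_cons_inv H)].
  - right.
    assert (Hyl : In y l).
    { destruct (perm_cons_In y x _ _ (Permutation_sym H) (in_eq _ _)); congruence. }
    destruct (in_split_perm _ _ Hyl) as [k Hk]; exists k; split; [exact Hk | perm_solve].
Qed.

Lemma perm_cons_dup_cases (x y : form) l l' m :
  Permutation m (x :: l) -> Permutation m (y :: y :: l') ->
  (x = y /\ Permutation l (y :: l')) \/
  exists k, Permutation l' (x :: k) /\ Permutation l (y :: y :: k).
Proof.
  intros Hx Hy; destruct (perm_cons_cases _ _ _ _ _ Hx Hy) as [[<- Hl]|[k [Hk1 Hk2]]].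
  - left; split; auto.
  - destruct (perm_cons_cases y x l' k (y :: l') (Permutation_refl _) Hk2)
      as [[<- Hl']|[k' [Hk'1 Hk'2]]].
    + left; split; [reflexivity | perm_solve].
    + right; exists k'; split; [exact Hk'1 | perm_solve].
Qed.

Definition cond_pair (p : form * form) : form := Cond (fst p) (snd p).

Lemma cond_pair_inj p q : cond_pair p = cond_pair q -> p = q.
Proof. destruct p, q; unfold cond_pair; simpl; congruence. Qed.

Lemma perm_map_cond_pair_cases x ps G0 G :
  Permutation (map cond_pair ps ++ G0) (x :: G) ->
  (exists q r, x = cond_pair q /\ Permutation ps (q :: r) /\
     Permutation G (map cond_pair r ++ G0)) \/
  (exists G0', Permutation G0 (x :: G0') /\ Permutation G (map cond_pair ps ++ G0')).
Proof.
  intros H; assert (Hx : In x (map cond_pair ps ++ G0))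
    by (apply (Permutation_in _ (Permutation_sym H)), in_eq).
  destruct (in_app_or _ _ _ Hx) as [Hps|HG0].
  - left; apply in_map_iff in Hps as [q [<- Hq]].
    destruct (in_split_perm _ _ Hq) as [r Hr]; exists q, r; split; [reflexivity | split; [exact Hr |]].
    apply (Permutation_map cond_pair) in Hr; simpl in Hr; perm_solve.
  - right; destruct (in_split_perm _ _ HG0) as [G0' HG0']; exists G0'; split; [exact HG0' | perm_solve].
Qed.

Section Calculus.
Variable c : calculus.

(* The antecedent premises of (CMC) are split into two families so that
   induction provides hypotheses for them. *)
Inductive der : list form -> list form -> Prop :=
| der_ax G D p : In (Atom p) G -> In (Atom p) D -> der G D
| der_bot G D : In Bot G -> der G D
| der_Land G D G0 a b :
    Permutation G (And a b :: G0) -> der (a :: b :: G0) D -> der G D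
| der_Rand G D D0 a b :
    Permutation D (And a b :: D0) -> der G (a :: D0) -> der G (b :: D0) -> der G D
| der_Lor G D G0 a b :
    Permutation G (Or a b :: G0) -> der (a :: G0) D -> der (b :: G0) D -> der G D
| der_Ror G D D0 a b :
    Permutation D (Or a b :: D0) -> der G (a :: b :: D0) -> der G D
| der_Limp G D G0 a b :
    Permutation G (Imp a b :: G0) -> der G0 (a :: D) -> der (b :: G0) D -> der G D
| der_Rimp G D D0 a b :
    Permutation D (Imp a b :: D0) -> der (a :: G) (b :: D0) -> der G D
| der_CE G D a0 a1 b0 b1 : has_CE c = true ->
    In (Cond a1 b1) G -> In (Cond a0 b0) D ->
    der [a0] [a1] -> der [a1] [a0] -> der [b0] [b1] -> der [b1] [b0] -> der G D
| der_CM G D a0 a1 b0 b1 : has_CM c = true ->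
    In (Cond a1 b1) G -> In (Cond a0 b0) D ->
    der [a0] [a1] -> der [a1] [a0] -> der [b1] [b0] -> der G D
| der_CMC G D G0 ps a0 b0 : has_CMC c = true -> ps <> [] ->
    Permutation G (map cond_pair ps ++ G0) -> In (Cond a0 b0) D ->
    (forall p, In p ps -> der [a0] [fst p]) -> (forall p, In p ps -> der [fst p] [a0]) ->
    der (map snd ps) [b0] -> der G D
| der_CN G D a0 b0 : has_CN c = true -> In (Cond a0 b0) D -> der [] [b0] -> der G D.

Lemma der_perm G D : der G D -> forall G' D', Permutation G G' -> Permutation D D' -> der G' D'.
Proof.
  induction 1; intros G' D' HG HD.
  - apply der_ax with p; eapply Permutation_in; eauto.
  - apply der_bot; eapply Permutation_in; eauto.
  - apply der_Land with G0 a b; [perm_solve | auto].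
  - apply der_Rand with D0 a b; [perm_solve | auto | auto].
  - apply der_Lor with G0 a b; [perm_solve | auto | auto].
  - apply der_Ror with D0 a b; [perm_solve | auto].
  - apply der_Limp with G0 a b; [perm_solve | auto | auto].
  - apply der_Rimp with D0 a b; [perm_solve | auto].
  - apply der_CE with a0 a1 b0 b1; auto; eapply Permutation_in; eauto.
  - apply der_CM with a0 a1 b0 b1; auto; eapply Permutation_in; eauto.
  - apply der_CMC with G0 ps a0 b0; auto; [perm_solve | eapply Permutation_in; eauto].
  - apply der_CN with a0 b0; auto; eapply Permutation_in; eauto.
Qed.

Lemma der_weaken G D G' D' : der G D -> der (G ++ G') (D ++ D').
Proof.
  intros H; revert G' D'; induction H; intros G' D'.
  - apply der_ax with p; apply in_or_app; auto.
  - apply der_bot; apply in_or_app; auto.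
  - apply der_Land with (G0 ++ G') a b; [perm_solve | apply IHder].
  - apply der_Rand with (D0 ++ D') a b; [perm_solve | apply IHder1 | apply IHder2].
  - apply der_Lor with (G0 ++ G') a b; [perm_solve | apply IHder1 | apply IHder2].
  - apply der_Ror with (D0 ++ D') a b; [perm_solve | apply IHder].
  - apply der_Limp with (G0 ++ G') a b; [perm_solve | apply (IHder1 G' D') | apply IHder2].
  - apply der_Rimp with (D0 ++ D') a b; [perm_solve | apply (IHder G' D')].
  - apply der_CE with a0 a1 b0 b1; auto; apply in_or_app; auto.
  - apply der_CM with a0 a1 b0 b1; auto; apply in_or_app; auto.
  - apply der_CMC with (G0 ++ G') ps a0 b0; auto; [perm_solve | apply in_or_app; auto].
  - apply der_CN with a0 b0; auto; apply in_or_app; auto.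
Qed.

Lemma der_weaken_perm G D L M G' D' :
  der G D -> Permutation G' (G ++ L) -> Permutation D' (D ++ M) -> der G' D'.
Proof.
  intros H HG HD; apply (der_perm _ _ (der_weaken _ _ L M H)); apply Permutation_sym; assumption.
Qed.

Lemma der_WL G D a : der G D -> der (a :: G) D.
Proof. intros H; apply (der_weaken_perm _ _ [a] [] _ _ H); perm_solve. Qed.

Lemma der_WR G D a : der G D -> der G (a :: D).
Proof. intros H; apply (der_weaken_perm _ _ [] [a] _ _ H); perm_solve. Qed.

End Calculus.

Lemma perm_app_nil_r {A : Type} (l : list A) : Permutation l (l ++ []).
Proof. rewrite app_nil_r; reflexivity. Qed.

Fixpoint derivable_der c G D (H : derivable c G D) {struct H} : der c G D :=
  match H in derivable _ G D return der c G D with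
  | perm _ G G' D D' HG HD h => der_perm c G D (derivable_der c _ _ h) G' D' HG HD
  | ax_atom _ G D p => der_ax c _ _ p (in_eq _ _) (in_eq _ _)
  | ax_bot _ G D => der_bot c _ _ (in_eq _ _)
  | L_and _ G D a b h => der_Land c _ _ G a b (Permutation_refl _) (derivable_der c _ _ h)
  | R_and _ G D a b h1 h2 =>
      der_Rand c _ _ D a b (Permutation_refl _) (derivable_der c _ _ h1) (derivable_der c _ _ h2)
  | L_or _ G D a b h1 h2 =>
      der_Lor c _ _ G a b (Permutation_refl _) (derivable_der c _ _ h1) (derivable_der c _ _ h2)
  | R_or _ G D a b h => der_Ror c _ _ D a b (Permutation_refl _) (derivable_der c _ _ h)
  | L_imp _ G D a b h1 h2 =>
      der_Limp c _ _ G a b (Permutation_refl _) (derivable_der c _ _ h1) (derivable_der c _ _ h2)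
  | R_imp _ G D a b h => der_Rimp c _ _ D a b (Permutation_refl _) (derivable_der c _ _ h)
  | WL _ G D a h => der_WL c G D a (derivable_der c _ _ h)
  | WR _ G D a h => der_WR c G D a (derivable_der c _ _ h)
  | rule_CE _ a0 a1 b0 b1 hc h1 h2 h3 h4 =>
      der_CE c _ _ a0 a1 b0 b1 hc (in_eq _ _) (in_eq _ _) (derivable_der c _ _ h1)
        (derivable_der c _ _ h2) (derivable_der c _ _ h3) (derivable_der c _ _ h4)
  | rule_CM _ a0 a1 b0 b1 hc h1 h2 h3 =>
      der_CM c _ _ a0 a1 b0 b1 hc (in_eq _ _) (in_eq _ _) (derivable_der c _ _ h1)
        (derivable_der c _ _ h2) (derivable_der c _ _ h3)
  | rule_CMC _ ps a0 b0 hc hne hps hb =>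
      der_CMC c _ _ [] ps a0 b0 hc hne (perm_app_nil_r _) (in_eq _ _)
        (fun p i => match hps p i with conj h _ => derivable_der c _ _ h end)
        (fun p i => match hps p i with conj _ h => derivable_der c _ _ h end)
        (derivable_der c _ _ hb)
  | rule_CN _ a0 b0 hc h => der_CN c _ _ a0 b0 hc (in_eq _ _) (derivable_der c _ _ h)
  end.

Lemma derivable_weaken_perm c G D L M G' D' : derivable c G D ->
  Permutation G' (L ++ G) -> Permutation D' (M ++ D) -> derivable c G' D'.
Proof.
  intros H HG HD; apply perm with (L ++ G) (M ++ D); try (apply Permutation_sym; assumption).
  clear HG HD; induction M as [|b M IHM]; simpl.
  - induction L as [|a L IHL]; simpl; [exact H | apply WL, IHL].
  - apply WR, IHM.
Qed.

Lemma der_derivable c G D : der c G D -> derivable c G D.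
Proof.
  induction 1.
  - destruct (in_split_perm _ _ H) as [G0 HG], (in_split_perm _ _ H0) as [D0 HD].
    apply (derivable_weaken_perm _ _ _ [] [] _ _ (ax_atom c G0 D0 p)); simpl; assumption.
  - destruct (in_split_perm _ _ H) as [G0 HG].
    apply (derivable_weaken_perm _ _ _ [] [] _ _ (ax_bot c G0 D)); simpl; [assumption | reflexivity].
  - apply perm with (And a b :: G0) D; [apply Permutation_sym | | apply L_and]; auto.
  - apply perm with G (And a b :: D0); [| apply Permutation_sym | apply R_and]; auto.
  - apply perm with (Or a b :: G0) D; [apply Permutation_sym | | apply L_or]; auto.
  - apply perm with G (Or a b :: D0); [| apply Permutation_sym | apply R_or]; auto.
  - apply perm with (Imp a b :: G0) D; [apply Permutation_sym | | apply L_imp]; auto.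
  - apply perm with G (Imp a b :: D0); [| apply Permutation_sym | apply R_imp]; auto.
  - destruct (in_split_perm _ _ H0) as [G0 HG], (in_split_perm _ _ H1) as [D0 HD].
    apply (derivable_weaken_perm c _ _ G0 D0 _ _ (rule_CE c a0 a1 b0 b1 H IHder1 IHder2 IHder3 IHder4));
      perm_solve.
  - destruct (in_split_perm _ _ H0) as [G0 HG], (in_split_perm _ _ H1) as [D0 HD].
    apply (derivable_weaken_perm c _ _ G0 D0 _ _ (rule_CM c a0 a1 b0 b1 H IHder1 IHder2 IHder3));
      perm_solve.
  - destruct (in_split_perm _ _ H2) as [D0 HD].
    assert (Hps : forall p, In p ps -> derivable c [a0] [fst p] /\ derivable c [fst p] [a0])
      by (intros; split; auto).
    apply (derivable_weaken_perm c _ _ G0 D0 _ _ (rule_CMC c ps a0 b0 H H0 Hps IHder));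
      fold cond_pair; perm_solve.
  - destruct (in_split_perm _ _ H0) as [D0 HD].
    apply (derivable_weaken_perm c _ _ G D0 _ _ (rule_CN c a0 b0 H IHder)); perm_solve.
Qed.

Ltac by_perm H := apply (der_perm _ _ _ H); perm_solve.

Section Inversion.
Variables (c : calculus) (X : form) (L R : list form).
Hypotheses (X_not_Atom : forall p, X <> Atom p) (X_not_Cond : forall a b, X <> Cond a b).

Section Left.
Hypothesis X_not_Bot : X <> Bot.
Hypothesis Land_case : forall a b G D,
  X = And a b -> der c (a :: b :: G) D -> der c (L ++ G) (R ++ D).
Hypothesis Lor_case : forall a b G D,
  X = Or a b -> der c (a :: G) D -> der c (b :: G) D -> der c (L ++ G) (R ++ D).
Hypothesis Limp_case : forall a b G D,
  X = Imp a b -> der c G (a :: D) -> der c (b :: G) D -> der c (L ++ G) (R ++ D).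

Lemma der_inv_left E D : der c E D -> forall G, Permutation E (X :: G) -> der c (L ++ G) (R ++ D).
Proof.
  induction 1; intros GG HE.
  - apply der_ax with p; apply in_or_app; right; [|assumption].
    apply (perm_cons_In_neq _ _ _ _ HE H); intros e; apply (X_not_Atom p); auto.
  - apply der_bot; apply in_or_app; right; apply (perm_cons_In_neq _ _ _ _ HE H); auto.
  - destruct (perm_cons_cases _ _ _ _ _ H HE) as [[e HG]|[k [Hk1 Hk2]]].
    + apply Land_case with a b; [auto | by_perm H0].
    + apply der_Land with (L ++ k) a b; [perm_solve | by_perm (IHder (a :: b :: k) ltac:(perm_solve))].
  - apply der_Rand with (R ++ D0) a b; [perm_solve | by_perm (IHder1 GG HE) | by_perm (IHder2 GG HE)].
  - destruct (perm_cons_cases _ _ _ _ _ H HE) as [[e HG]|[k [Hk1 Hk2]]].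
    + apply Lor_case with a b; [auto | by_perm H0 | by_perm H1].
    + apply der_Lor with (L ++ k) a b; [perm_solve | by_perm (IHder1 (a :: k) ltac:(perm_solve))
                                                    | by_perm (IHder2 (b :: k) ltac:(perm_solve))].
  - apply der_Ror with (R ++ D0) a b; [perm_solve | by_perm (IHder GG HE)].
  - destruct (perm_cons_cases _ _ _ _ _ H HE) as [[e HG]|[k [Hk1 Hk2]]].
    + apply Limp_case with a b; [auto | by_perm H0 | by_perm H1].
    + apply der_Limp with (L ++ k) a b; [perm_solve | by_perm (IHder1 k Hk1)
                                                     | by_perm (IHder2 (b :: k) ltac:(perm_solve))].
  - apply der_Rimp with (R ++ D0) a b; [perm_solve | by_perm (IHder (a :: GG) ltac:(perm_solve))].
  - apply der_CE with a0 a1 b0 b1; auto; apply in_or_app; right; auto.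
    apply (perm_cons_In_neq _ _ _ _ HE H0); auto.
  - apply der_CM with a0 a1 b0 b1; auto; apply in_or_app; right; auto.
    apply (perm_cons_In_neq _ _ _ _ HE H0); auto.
  - destruct (perm_map_cond_pair_cases X ps G0 GG) as [[q [r [e _]]]|[G0' [_ HG]]];
      [perm_solve | destruct q; contradiction (X_not_Cond _ _ e) |].
    apply der_CMC with (L ++ G0') ps a0 b0; auto; [perm_solve | apply in_or_app; auto].
  - apply der_CN with a0 b0; auto; apply in_or_app; auto.
Qed.

End Left.

Section Right.
Hypothesis Rand_case : forall a b G D,
  X = And a b -> der c G (a :: D) -> der c G (b :: D) -> der c (L ++ G) (R ++ D).
Hypothesis Ror_case : forall a b G D,
  X = Or a b -> der c G (a :: b :: D) -> der c (L ++ G) (R ++ D).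
Hypothesis Rimp_case : forall a b G D,
  X = Imp a b -> der c (a :: G) (b :: D) -> der c (L ++ G) (R ++ D).

Lemma der_inv_right G F : der c G F -> forall D, Permutation F (X :: D) -> der c (L ++ G) (R ++ D).
Proof.
  induction 1; intros DD HF.
  - apply der_ax with p; apply in_or_app; right; [assumption|].
    apply (perm_cons_In_neq _ _ _ _ HF H0); intros e; apply (X_not_Atom p); auto.
  - apply der_bot; apply in_or_app; auto.
  - apply der_Land with (L ++ G0) a b; [perm_solve | by_perm (IHder DD HF)].
  - destruct (perm_cons_cases _ _ _ _ _ H HF) as [[e HD]|[k [Hk1 Hk2]]].
    + apply Rand_case with a b; [auto | by_perm H0 | by_perm H1].
    + apply der_Rand with (R ++ k) a b; [perm_solve | by_perm (IHder1 (a :: k) ltac:(perm_solve))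
                                                    | by_perm (IHder2 (b :: k) ltac:(perm_solve))].
  - apply der_Lor with (L ++ G0) a b; [perm_solve | by_perm (IHder1 DD HF) | by_perm (IHder2 DD HF)].
  - destruct (perm_cons_cases _ _ _ _ _ H HF) as [[e HD]|[k [Hk1 Hk2]]].
    + apply Ror_case with a b; [auto | by_perm H0].
    + apply der_Ror with (R ++ k) a b; [perm_solve | by_perm (IHder (a :: b :: k) ltac:(perm_solve))].
  - apply der_Limp with (L ++ G0) a b;
      [perm_solve | by_perm (IHder1 (a :: DD) ltac:(perm_solve)) | by_perm (IHder2 DD HF)].
  - destruct (perm_cons_cases _ _ _ _ _ H HF) as [[e HD]|[k [Hk1 Hk2]]].
    + apply Rimp_case with a b; [auto | by_perm H0].
    + apply der_Rimp with (R ++ k) a b; [perm_solve | by_perm (IHder (b :: k) ltac:(perm_solve))].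
  - apply der_CE with a0 a1 b0 b1; auto; apply in_or_app; right; auto.
    apply (perm_cons_In_neq _ _ _ _ HF H1); auto.
  - apply der_CM with a0 a1 b0 b1; auto; apply in_or_app; right; auto.
    apply (perm_cons_In_neq _ _ _ _ HF H1); auto.
  - apply der_CMC with (L ++ G0) ps a0 b0; auto; [perm_solve | apply in_or_app; right].
    apply (perm_cons_In_neq _ _ _ _ HF H2); auto.
  - apply der_CN with a0 b0; auto; apply in_or_app; right.
    apply (perm_cons_In_neq _ _ _ _ HF H0); auto.
Qed.

End Right.
End Inversion.

Ltac inversion_side_goals :=
  first [ intros; discriminate
        | intros ? ? ? ? e; injection e as <- <-; simpl; auto ].

Lemma der_Land_inv c a b G D : der c (And a b :: G) D -> der c (a :: b :: G) D.
Proof.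
  intros H; apply (der_inv_left c (And a b) [a; b] []) with (And a b :: G); auto;
    inversion_side_goals.
Qed.

Lemma der_Lor_inv_l c a b G D : der c (Or a b :: G) D -> der c (a :: G) D.
Proof.
  intros H; apply (der_inv_left c (Or a b) [a] []) with (Or a b :: G); auto; inversion_side_goals.
Qed.

Lemma der_Lor_inv_r c a b G D : der c (Or a b :: G) D -> der c (b :: G) D.
Proof.
  intros H; apply (der_inv_left c (Or a b) [b] []) with (Or a b :: G); auto; inversion_side_goals.
Qed.

Lemma der_Limp_inv_l c a b G D : der c (Imp a b :: G) D -> der c G (a :: D).
Proof.
  intros H; apply (der_inv_left c (Imp a b) [] [a]) with (Imp a b :: G); auto;
    inversion_side_goals.
Qed.

Lemma der_Limp_inv_r c a b G D : der c (Imp a b :: G) D -> der c (b :: G) D.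
Proof.
  intros H; apply (der_inv_left c (Imp a b) [b] []) with (Imp a b :: G); auto;
    inversion_side_goals.
Qed.

Lemma der_Rand_inv_l c a b G D : der c G (And a b :: D) -> der c G (a :: D).
Proof.
  intros H; apply (der_inv_right c (And a b) [] [a]) with (And a b :: D); auto;
    inversion_side_goals.
Qed.

Lemma der_Rand_inv_r c a b G D : der c G (And a b :: D) -> der c G (b :: D).
Proof.
  intros H; apply (der_inv_right c (And a b) [] [b]) with (And a b :: D); auto;
    inversion_side_goals.
Qed.

Lemma der_Ror_inv c a b G D : der c G (Or a b :: D) -> der c G (a :: b :: D).
Proof.
  intros H; apply (der_inv_right c (Or a b) [] [a; b]) with (Or a b :: D); auto;
    inversion_side_goals.
Qed.

Lemma der_Rimp_inv c a b G D : der c G (Imp a b :: D) -> der c (a :: G) (b :: D).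
Proof.
  intros H; apply (der_inv_right c (Imp a b) [a] [b]) with (Imp a b :: D); auto;
    inversion_side_goals.
Qed.

Section Contraction.
Variables (c : calculus) (A : form).

Section Left.
Hypothesis Land_case : forall a b G D,
  A = And a b -> der c (a :: b :: A :: G) D -> der c (A :: G) D.
Hypothesis Lor_case : forall a b G D,
  A = Or a b -> der c (a :: A :: G) D -> der c (b :: A :: G) D -> der c (A :: G) D.
Hypothesis Limp_case : forall a b G D,
  A = Imp a b -> der c (A :: G) (a :: D) -> der c (b :: A :: G) D -> der c (A :: G) D.
Hypothesis Cond_case : forall a b G D,
  A = Cond a b -> der c (b :: b :: G) D -> der c (b :: G) D.

(* Two copies of [A] that are both principal in (CMC) are merged into one,
   contracting the two copies of the consequent of [A] in the premise
   [map snd ps ⇒ b0]. *)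
Lemma der_CMC_contr_left G G0 D ps a0 b0 : has_CMC c = true -> ps <> [] ->
  Permutation (map cond_pair ps ++ G0) (A :: A :: G) -> In (Cond a0 b0) D ->
  (forall p, In p ps -> der c [a0] [fst p]) -> (forall p, In p ps -> der c [fst p] [a0]) ->
  der c (map snd ps) [b0] -> der c (A :: G) D.
Proof.
  intros hc hne HG HD Hl Hr Hb.
  destruct (perm_map_cond_pair_cases A ps G0 (A :: G) HG)
    as [[q [r [eA [Hps HG']]]]|[G0' [_ HG']]];
    [| exact (der_CMC c _ _ G0' ps a0 b0 hc hne HG' HD Hl Hr Hb)].
  assert (Hmap : Permutation (map cond_pair ps) (A :: map cond_pair r))
    by (rewrite eA; exact (Permutation_map cond_pair Hps)).
  destruct (perm_map_cond_pair_cases A r G0 G (Permutation_sym HG'))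
    as [[q' [r' [eA' [Hr' HG'']]]]|[G0' [HG0 HG'']]].
  - assert (q' = q) as -> by (apply cond_pair_inj; congruence).
    assert (Hps' : Permutation ps (q :: q :: r')) by (rewrite Hps; auto).
    apply der_CMC with G0 (q :: r') a0 b0; auto.
    + discriminate.
    + simpl; rewrite <- eA; perm_solve.
    + intros p Hp; apply Hl, (Permutation_in _ (Permutation_sym Hps')); simpl in *; tauto.
    + intros p Hp; apply Hr, (Permutation_in _ (Permutation_sym Hps')); simpl in *; tauto.
    + apply (Cond_case (fst q) (snd q)); [exact eA |].
      exact (der_perm _ _ _ Hb _ _ (Permutation_map snd Hps') (Permutation_refl _)).
  - apply der_CMC with G0' ps a0 b0; auto; perm_solve.
Qed.

Lemma der_contr_left E D : der c E D -> forall G, Permutation E (A :: A :: G) -> der c (A :: G) D.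
Proof.
  induction 1; intros GG HE.
  - apply der_ax with p; auto; exact (perm_dup_In _ _ _ _ HE H).
  - apply der_bot; exact (perm_dup_In _ _ _ _ HE H).
  - destruct (perm_cons_dup_cases _ _ _ _ _ H HE) as [[e HG]|[l [Hl1 Hl2]]].
    + apply Land_case with a b; [auto | by_perm H0].
    + apply der_Land with (A :: l) a b; [perm_solve | by_perm (IHder (a :: b :: l) ltac:(perm_solve))].
  - apply der_Rand with D0 a b; auto.
  - destruct (perm_cons_dup_cases _ _ _ _ _ H HE) as [[e HG]|[l [Hl1 Hl2]]].
    + apply Lor_case with a b; [auto | by_perm H0 | by_perm H1].
    + apply der_Lor with (A :: l) a b; [perm_solve | by_perm (IHder1 (a :: l) ltac:(perm_solve))
                                                    | by_perm (IHder2 (b :: l) ltac:(perm_solve))].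
  - apply der_Ror with D0 a b; auto.
  - destruct (perm_cons_dup_cases _ _ _ _ _ H HE) as [[e HG]|[l [Hl1 Hl2]]].
    + apply Limp_case with a b; [auto | by_perm H0 | by_perm H1].
    + apply der_Limp with (A :: l) a b; [perm_solve | exact (IHder1 l Hl2)
                                                     | by_perm (IHder2 (b :: l) ltac:(perm_solve))].
  - apply der_Rimp with D0 a b; [auto | by_perm (IHder (a :: GG) ltac:(perm_solve))].
  - apply der_CE with a0 a1 b0 b1; auto; exact (perm_dup_In _ _ _ _ HE H0).
  - apply der_CM with a0 a1 b0 b1; auto; exact (perm_dup_In _ _ _ _ HE H0).
  - apply der_CMC_contr_left with G0 ps a0 b0; auto; perm_solve.
  - apply der_CN with a0 b0; auto.
Qed.

End Left.

Section Right.
Hypothesis Rand_case : forall a b G D,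
  A = And a b -> der c G (a :: A :: D) -> der c G (b :: A :: D) -> der c G (A :: D).
Hypothesis Ror_case : forall a b G D,
  A = Or a b -> der c G (a :: b :: A :: D) -> der c G (A :: D).
Hypothesis Rimp_case : forall a b G D,
  A = Imp a b -> der c (a :: G) (b :: A :: D) -> der c G (A :: D).

Lemma der_contr_right G F : der c G F -> forall D, Permutation F (A :: A :: D) -> der c G (A :: D).
Proof.
  induction 1; intros DD HF.
  - apply der_ax with p; auto; exact (perm_dup_In _ _ _ _ HF H0).
  - apply der_bot; auto.
  - apply der_Land with G0 a b; auto.
  - destruct (perm_cons_dup_cases _ _ _ _ _ H HF) as [[e HD]|[l [Hl1 Hl2]]].
    + apply Rand_case with a b; [auto | by_perm H0 | by_perm H1].
    + apply der_Rand with (A :: l) a b; [perm_solve | by_perm (IHder1 (a :: l) ltac:(perm_solve))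
                                                    | by_perm (IHder2 (b :: l) ltac:(perm_solve))].
  - apply der_Lor with G0 a b; auto.
  - destruct (perm_cons_dup_cases _ _ _ _ _ H HF) as [[e HD]|[l [Hl1 Hl2]]].
    + apply Ror_case with a b; [auto | by_perm H0].
    + apply der_Ror with (A :: l) a b; [perm_solve | by_perm (IHder (a :: b :: l) ltac:(perm_solve))].
  - apply der_Limp with G0 a b; [auto | by_perm (IHder1 (a :: DD) ltac:(perm_solve)) | auto].
  - destruct (perm_cons_dup_cases _ _ _ _ _ H HF) as [[e HD]|[l [Hl1 Hl2]]].
    + apply Rimp_case with a b; [auto | by_perm H0].
    + apply der_Rimp with (A :: l) a b; [perm_solve | by_perm (IHder (b :: l) ltac:(perm_solve))].
  - apply der_CE with a0 a1 b0 b1; auto; exact (perm_dup_In _ _ _ _ HF H1).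
  - apply der_CM with a0 a1 b0 b1; auto; exact (perm_dup_In _ _ _ _ HF H1).
  - apply der_CMC with G0 ps a0 b0; auto; exact (perm_dup_In _ _ _ _ HF H2).
  - apply der_CN with a0 b0; auto; exact (perm_dup_In _ _ _ _ HF H0).
Qed.

End Right.
End Contraction.

Definition contraction_admissible c A : Prop :=
  (forall G D, der c (A :: A :: G) D -> der c (A :: G) D) /\
  (forall G D, der c G (A :: A :: D) -> der c G (A :: D)).

Ltac contraction_by_cases :=
  split; intros G D H;
  [ eapply der_contr_left; [.. | exact H | reflexivity]
  | eapply der_contr_right; [.. | exact H | reflexivity] ];
  try (intros; discriminate).

Lemma contraction_And c a b : contraction_admissible c a -> contraction_admissible c b ->
  contraction_admissible c (And a b).
Proof.
  intros [CLa CRa] [CLb CRb]; contraction_by_cases.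
  - intros ? ? G' D' [= <- <-] H'.
    apply der_Land with G' a b; [reflexivity |].
    assert (Hab : der c (a :: a :: b :: b :: G') D')
      by by_perm (der_Land_inv c a b (a :: b :: G') D' ltac:(by_perm H')).
    assert (Hb : der c (b :: b :: a :: G') D') by by_perm (CLa _ _ Hab).
    by_perm (CLb _ _ Hb).
  - intros ? ? G' D' [= <- <-] Ha Hb.
    apply der_Rand with D' a b; [reflexivity | apply CRa | apply CRb].
    + by_perm (der_Rand_inv_l c a b G' (a :: D') ltac:(by_perm Ha)).
    + by_perm (der_Rand_inv_r c a b G' (b :: D') ltac:(by_perm Hb)).
Qed.

Lemma contraction_Or c a b : contraction_admissible c a -> contraction_admissible c b ->
  contraction_admissible c (Or a b).
Proof.
  intros [CLa CRa] [CLb CRb]; contraction_by_cases.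
  - intros ? ? G' D' [= <- <-] Ha Hb.
    apply der_Lor with G' a b; [reflexivity | apply CLa | apply CLb].
    + by_perm (der_Lor_inv_l c a b (a :: G') D' ltac:(by_perm Ha)).
    + by_perm (der_Lor_inv_r c a b (b :: G') D' ltac:(by_perm Hb)).
  - intros ? ? G' D' [= <- <-] H'.
    apply der_Ror with D' a b; [reflexivity |].
    assert (Hab : der c G' (a :: a :: b :: b :: D'))
      by by_perm (der_Ror_inv c a b G' (a :: b :: D') ltac:(by_perm H')).
    assert (Hb : der c G' (b :: b :: a :: D')) by by_perm (CRa _ _ Hab).
    by_perm (CRb _ _ Hb).
Qed.

Lemma contraction_Imp c a b : contraction_admissible c a -> contraction_admissible c b ->
  contraction_admissible c (Imp a b).
Proof.
  intros [CLa CRa] [CLb CRb]; contraction_by_cases.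
  - intros ? ? G' D' [= <- <-] Ha Hb.
    apply der_Limp with G' a b; [reflexivity | apply CRa | apply CLb].
    + exact (der_Limp_inv_l c a b G' (a :: D') Ha).
    + by_perm (der_Limp_inv_r c a b (b :: G') D' ltac:(by_perm Hb)).
  - intros ? ? G' D' [= <- <-] H'.
    apply der_Rimp with D' a b; [reflexivity |].
    assert (Hab : der c (a :: a :: G') (b :: b :: D'))
      by by_perm (der_Rimp_inv c a b (a :: G') (b :: D') ltac:(by_perm H')).
    exact (CRb _ _ (CLa _ _ Hab)).
Qed.

Lemma contraction_Cond c a b : contraction_admissible c b -> contraction_admissible c (Cond a b).
Proof.
  intros [CLb _]; contraction_by_cases.
  intros ? ? G' D' [= <- <-]; exact (CLb G' D').
Qed.

Lemma der_contraction c A : contraction_admissible c A.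
Proof.
  induction A; auto using contraction_And, contraction_Or, contraction_Imp, contraction_Cond;
    contraction_by_cases.
Qed.

Lemma der_contr_app c L M G D : der c (L ++ L ++ G) (M ++ M ++ D) -> der c (L ++ G) (M ++ D).
Proof.
  revert G D M; induction L as [|x L IHL]; intros G D M H; simpl in *.
  - revert G D H; induction M as [|y M IHM]; intros G D H; simpl in *; [exact H |].
    apply (proj2 (der_contraction c y)).
    by_perm (IHM G (y :: y :: D) ltac:(by_perm H)).
  - apply (proj1 (der_contraction c x)).
    by_perm (IHL (x :: x :: G) D M ltac:(by_perm H)).
Qed.

Definition cut_admissible c phi : Prop := forall G1 D1 G2 D2,
  der c G1 (phi :: D1) -> der c (phi :: G2) D2 -> der c (G1 ++ G2) (D1 ++ D2).

Lemma der_cut_single c a x y : cut_admissible c a -> der c [x] [a] -> der c [a] [y] -> der c [x] [y].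
Proof. intros Ha Hxa Hay; exact (Ha [x] [] [] [y] Hxa Hay). Qed.

Section PrincipalCuts.
Variables (c : calculus) (a b : form).
Hypotheses (cut_a : cut_admissible c a) (cut_b : cut_admissible c b).

Lemma cut_principal_And G D1 G2 D2 : der c G (a :: D1) -> der c G (b :: D1) ->
  der c (And a b :: G2) D2 -> der c (G ++ G2) (D1 ++ D2).
Proof.
  intros Ha Hb H.
  assert (Hb' : der c (G ++ a :: G2) (D1 ++ D2))
    by (apply cut_b; [exact Hb | by_perm (der_Land_inv c a b G2 D2 H)]).
  apply (der_contr_app c G D1 G2 D2), cut_a; [exact Ha | by_perm Hb'].
Qed.

Lemma cut_principal_Or G D1 G2 D2 : der c G (a :: b :: D1) ->
  der c (Or a b :: G2) D2 -> der c (G ++ G2) (D1 ++ D2).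
Proof.
  intros Hab H.
  assert (Ha : der c (G ++ G2) (b :: D1 ++ D2))
    by by_perm (cut_a G (b :: D1) G2 D2 Hab (der_Lor_inv_l c a b G2 D2 H)).
  assert (Hb := cut_b _ _ _ _ Ha (der_Lor_inv_r c a b G2 D2 H)).
  by_perm (der_contr_app c G2 D2 G D1 ltac:(by_perm Hb)).
Qed.

Lemma cut_principal_Imp G D1 G2 D2 : der c (a :: G) (b :: D1) ->
  der c (Imp a b :: G2) D2 -> der c (G ++ G2) (D1 ++ D2).
Proof.
  intros Hab H.
  assert (Hb : der c (a :: G ++ G2) (D1 ++ D2))
    by exact (cut_b (a :: G) D1 G2 D2 Hab (der_Limp_inv_r c a b G2 D2 H)).
  assert (Ha := cut_a _ _ _ _ (der_Limp_inv_l c a b G2 D2 H) Hb).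
  by_perm (der_contr_app c G2 D2 G D1 ltac:(by_perm Ha)).
Qed.

End PrincipalCuts.

Inductive cond_rule_concl c (E : list form) (u v : form) : Prop :=
| ccl_CE a1 b1 : has_CE c = true -> In (Cond a1 b1) E ->
    der c [u] [a1] -> der c [a1] [u] -> der c [v] [b1] -> der c [b1] [v] -> cond_rule_concl c E u v
| ccl_CM a1 b1 : has_CM c = true -> In (Cond a1 b1) E ->
    der c [u] [a1] -> der c [a1] [u] -> der c [b1] [v] -> cond_rule_concl c E u v
| ccl_CMC E0 ps : has_CMC c = true -> ps <> [] -> Permutation E (map cond_pair ps ++ E0) ->
    (forall p, In p ps -> der c [u] [fst p]) -> (forall p, In p ps -> der c [fst p] [u]) ->
    der c (map snd ps) [v] -> cond_rule_concl c E u v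
| ccl_CN : has_CN c = true -> der c [] [v] -> cond_rule_concl c E u v.

Ltac calculus_clash c := destruct c; discriminate.

Section ConditionalCut.
Variables (c : calculus) (u v : form).
Hypotheses (cut_u : cut_admissible c u) (cut_v : cut_admissible c v).

Lemma cut_cond_CE E G D a0 b0 : cond_rule_concl c E u v -> has_CE c = true ->
  In (Cond a0 b0) D -> der c [a0] [u] -> der c [u] [a0] -> der c [b0] [v] -> der c [v] [b0] ->
  der c (E ++ G) D.
Proof.
  destruct 1; intros hc HD Ha0u Hua0 Hb0v Hvb0; try calculus_clash c.
  - apply der_CE with a0 a1 b0 b1; auto using in_or_app;
      [apply (der_cut_single c u) | apply (der_cut_single c u)
      |apply (der_cut_single c v) | apply (der_cut_single c v)]; auto.
  - apply der_CN with a0 b0; auto; exact (cut_v [] [] [] [b0] H0 Hvb0).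
Qed.

Lemma cut_cond_CM E G D a0 b0 : cond_rule_concl c E u v -> has_CM c = true ->
  In (Cond a0 b0) D -> der c [a0] [u] -> der c [u] [a0] -> der c [v] [b0] -> der c (E ++ G) D.
Proof.
  destruct 1; intros hc HD Ha0u Hua0 Hvb0; try calculus_clash c.
  - apply der_CM with a0 a1 b0 b1; auto using in_or_app;
      [apply (der_cut_single c u) | apply (der_cut_single c u) | apply (der_cut_single c v)]; auto.
  - apply der_CN with a0 b0; auto; exact (cut_v [] [] [] [b0] H0 Hvb0).
Qed.

(* [r] are the pairs principal in (CMC) beside [(u, v)] on the right; the
   pairs of a left (CMC) take the place of [(u, v)], and after a left (CN) it
   simply disappears. *)
Lemma cut_cond_CMC E G0 D r a0 b0 : cond_rule_concl c E u v -> has_CMC c = true ->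
  In (Cond a0 b0) D -> der c [a0] [u] -> der c [u] [a0] ->
  (forall p, In p r -> der c [a0] [fst p]) -> (forall p, In p r -> der c [fst p] [a0]) ->
  der c (v :: map snd r) [b0] -> der c (E ++ map cond_pair r ++ G0) D.
Proof.
  destruct 1; intros hc HD Ha0u Hua0 Hl Hr Hb; try calculus_clash c.
  - apply der_CMC with (E0 ++ G0) (ps ++ r) a0 b0; auto.
    + destruct ps; [contradiction | discriminate].
    + rewrite map_app; perm_solve.
    + intros p Hp; apply in_app_or in Hp as [Hp|Hp]; auto; apply (der_cut_single c u); auto.
    + intros p Hp; apply in_app_or in Hp as [Hp|Hp]; auto; apply (der_cut_single c u); auto.
    + rewrite map_app; exact (cut_v _ [] _ [b0] H4 Hb).
  - assert (Hr0 : der c (map snd r) [b0]) by exact (cut_v [] [] _ [b0] H0 Hb).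
    destruct r as [|p r].
    + apply der_CN with a0 b0; auto.
    + apply der_CMC with (E ++ G0) (p :: r) a0 b0; auto; [discriminate | perm_solve].
Qed.

Lemma cut_cond_right E : cond_rule_concl c E u v ->
  forall E2 D, der c E2 D -> forall G, Permutation E2 (Cond u v :: G) -> der c (E ++ G) D.
Proof.
  intros HC; induction 1; intros GG HE.
  - apply der_ax with p; auto; apply in_or_app; right.
    apply (perm_cons_In_neq _ _ _ _ HE H); discriminate.
  - apply der_bot; apply in_or_app; right; apply (perm_cons_In_neq _ _ _ _ HE H); discriminate.
  - destruct (perm_cons_cases _ _ _ _ _ H HE) as [[e _]|[k [Hk1 Hk2]]]; [discriminate |].
    apply der_Land with (E ++ k) a b; [perm_solve | by_perm (IHder (a :: b :: k) ltac:(perm_solve))].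
  - apply der_Rand with D0 a b; auto.
  - destruct (perm_cons_cases _ _ _ _ _ H HE) as [[e _]|[k [Hk1 Hk2]]]; [discriminate |].
    apply der_Lor with (E ++ k) a b; [perm_solve | by_perm (IHder1 (a :: k) ltac:(perm_solve))
                                                  | by_perm (IHder2 (b :: k) ltac:(perm_solve))].
  - apply der_Ror with D0 a b; auto.
  - destruct (perm_cons_cases _ _ _ _ _ H HE) as [[e _]|[k [Hk1 Hk2]]]; [discriminate |].
    apply der_Limp with (E ++ k) a b; [perm_solve | exact (IHder1 k Hk1)
                                                   | by_perm (IHder2 (b :: k) ltac:(perm_solve))].
  - apply der_Rimp with D0 a b; [auto | by_perm (IHder (a :: GG) ltac:(perm_solve))].
  - destruct (perm_cons_In _ _ _ _ HE H0) as [[= -> ->]|Hi].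
    + exact (cut_cond_CE E GG D a0 b0 HC H H1 H2 H3 H4 H5).
    + apply der_CE with a0 a1 b0 b1; auto using in_or_app.
  - destruct (perm_cons_In _ _ _ _ HE H0) as [[= -> ->]|Hi].
    + exact (cut_cond_CM E GG D a0 b0 HC H H1 H2 H3 H4).
    + apply der_CM with a0 a1 b0 b1; auto using in_or_app.
  - destruct (perm_map_cond_pair_cases (Cond u v) ps G0 GG)
      as [[[u' v'] [r [e [Hps HG]]]]|[G0' [_ HG]]];
      [perm_solve | injection e as <- <- |].
    + assert (Huv : In (u, v) ps) by (apply (Permutation_in _ (Permutation_sym Hps)), in_eq).
      assert (Hr : forall p, In p r -> In p ps)
        by (intros p Hp; apply (Permutation_in _ (Permutation_sym Hps)), in_cons, Hp).
      apply (der_perm _ _ _ (cut_cond_CMC E G0 D r a0 b0 HC H H2 (H3 _ Huv) (H5 _ Huv)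
               (fun p Hp => H3 p (Hr p Hp)) (fun p Hp => H5 p (Hr p Hp))
               (der_perm _ _ _ H7 _ _ (Permutation_map snd Hps) (Permutation_refl _))));
        perm_solve.
    + apply der_CMC with (E ++ G0') ps a0 b0; auto; perm_solve.
  - apply der_CN with a0 b0; auto.
Qed.

End ConditionalCut.

Definition immediate_subformulas (phi a b : form) : Prop :=
  phi = And a b \/ phi = Or a b \/ phi = Imp a b \/ phi = Cond a b.

Section CutOnLeftPremise.
Variables (c : calculus) (phi : form).
Hypothesis cut_subformulas : forall a b,
  immediate_subformulas phi a b -> cut_admissible c a /\ cut_admissible c b.

Lemma cut_cond_principal E D1 G2 D2 u v : Cond u v = phi -> cond_rule_concl c E u v ->
  der c (phi :: G2) D2 -> der c (E ++ G2) (D1 ++ D2).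
Proof.
  intros e HC HR.
  destruct (cut_subformulas u v) as [cut_u cut_v]; [unfold immediate_subformulas; auto |].
  apply (der_weaken_perm c _ _ [] D1 _ _ (cut_cond_right c u v cut_u cut_v E HC _ _ HR G2
    ltac:(rewrite e; reflexivity))); perm_solve.
Qed.

Lemma cut_left E F : der c E F -> forall D1, Permutation F (phi :: D1) ->
  forall G2 D2, der c (phi :: G2) D2 -> der c (E ++ G2) (D1 ++ D2).
Proof.
  induction 1; intros D1 HF G2 D2 HR.
  - destruct (perm_cons_In _ _ _ _ HF H0) as [<-|Hi].
    + destruct (in_split_perm _ _ H) as [E' HE'].
      apply (der_weaken_perm c _ _ E' D1 _ _ HR); perm_solve.
    + apply der_ax with p; apply in_or_app; auto.
  - apply der_bot; apply in_or_app; auto.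
  - apply der_Land with (G0 ++ G2) a b; [perm_solve | exact (IHder D1 HF G2 D2 HR)].
  - destruct (perm_cons_cases _ _ _ _ _ H HF) as [[e HD]|[k [Hk1 Hk2]]].
    + destruct (cut_subformulas a b) as [cut_a cut_b]; [left; auto |].
      rewrite <- e in HR; apply (cut_principal_And c a b cut_a cut_b);
        [by_perm H0 | by_perm H1 | exact HR].
    + apply der_Rand with (k ++ D2) a b;
        [perm_solve | apply (IHder1 (a :: k)) | apply (IHder2 (b :: k))];
        auto; perm_solve.
  - apply der_Lor with (G0 ++ G2) a b; [perm_solve | apply IHder1 | apply IHder2]; auto.
  - destruct (perm_cons_cases _ _ _ _ _ H HF) as [[e HD]|[k [Hk1 Hk2]]].
    + destruct (cut_subformulas a b) as [cut_a cut_b]; [right; left; auto |].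
      rewrite <- e in HR; apply (cut_principal_Or c a b cut_a cut_b); [by_perm H0 | exact HR].
    + apply der_Ror with (k ++ D2) a b; [perm_solve | apply (IHder (a :: b :: k))]; auto; perm_solve.
  - apply der_Limp with (G0 ++ G2) a b; [perm_solve | apply (IHder1 (a :: D1)) | apply IHder2]; auto;
      perm_solve.
  - destruct (perm_cons_cases _ _ _ _ _ H HF) as [[e HD]|[k [Hk1 Hk2]]].
    + destruct (cut_subformulas a b) as [cut_a cut_b]; [right; right; left; auto |].
      rewrite <- e in HR; apply (cut_principal_Imp c a b cut_a cut_b); [by_perm H0 | exact HR].
    + apply der_Rimp with (k ++ D2) a b; [perm_solve | apply (IHder (b :: k))]; auto; perm_solve.
  - destruct (perm_cons_In _ _ _ _ HF H1) as [e|Hi].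
    + apply (cut_cond_principal _ _ _ _ _ _ e); [econstructor 1; eauto | exact HR].
    + apply der_CE with a0 a1 b0 b1; auto using in_or_app.
  - destruct (perm_cons_In _ _ _ _ HF H1) as [e|Hi].
    + apply (cut_cond_principal _ _ _ _ _ _ e); [econstructor 2; eauto | exact HR].
    + apply der_CM with a0 a1 b0 b1; auto using in_or_app.
  - destruct (perm_cons_In _ _ _ _ HF H2) as [e|Hi].
    + apply (cut_cond_principal _ _ _ _ _ _ e); [econstructor 3; eauto | exact HR].
    + apply der_CMC with (G0 ++ G2) ps a0 b0; auto using in_or_app; perm_solve.
  - destruct (perm_cons_In _ _ _ _ HF H0) as [e|Hi].
    + apply (cut_cond_principal _ _ _ _ _ _ e); [econstructor 4; eauto | exact HR].
    + apply der_CN with a0 b0; auto using in_or_app.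
Qed.

End CutOnLeftPremise.

Lemma der_cut c phi : cut_admissible c phi.
Proof.
  induction phi; intros G1 D1 G2 D2 HL HR;
    refine (cut_left c _ _ G1 _ HL D1 (Permutation_refl _) _ _ HR);
    intros x y e; unfold immediate_subformulas in e;
    repeat destruct e as [e|e]; try discriminate; injection e as <- <-; auto.
Qed.

Theorem mainTheorem2 : forall (c : calculus) (G1 G2 D1 D2 : list form) (phi : form),
  derivable c G1 (phi :: D1) ->
  derivable c (phi :: G2) D2 ->
  derivable c (G1 ++ G2) (D1 ++ D2).
Proof.
  intros c G1 G2 D1 D2 phi HL HR.
  apply der_derivable, (der_cut c phi); apply derivable_der; assumption.
Qed.
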